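(* Let $X$ be a finite simple connected graph with adjacency matrix $A$, and let $u \ne v$ be vertices such that $u$ is spectrally extremal and $u$ and $v$ are strongly cospectral, say $E_r e_v = \sigma_r E_r e_u$ with $\sigma_r \in \{+1,-1\}$ for each $\theta_r \in \Phi_u$. Let $p(x)$ be the polynomial of minimum degree with $p(\theta_r) = \sigma_r$ for all $\theta_r \in \Phi_u$ (so that $p(A)e_u = e_v$). Let $X'$ be the connected component of $X \setminus v$ containing $u$. Then, up to a nonzero constant factor, $p(x)$ is the minimal polynomial of $u$ with respect to $X'$, i.e. the monic polynomial $q$ of least degree such that $q(A(X'))e_u = 0$.
   Context: $A = \sum_r \theta_r E_r$ is the spectral decomposition of $A$ ($\theta_r$ distinct eigenvalues, $E_r$ orthogonal projections onto eigenspaces); $e_w$ is the standard basis vector of $w$. Eigenvalue support: $\Phi_u = \{\theta_r : E_r e_u \ne 0\}$; dual degree $d^*(u) = |\Phi_u|-1$; eccentricity $\varepsilon_u = \max_w d(u,w)$; $u$ is spectrally extremal if $\varepsilon_u = d^*(u)$. Vertices $u,v$ are strongly cospectral if $E_r e_u = \pm E_r e_v$ for every $r$. $A(X')$ denotes the adjacency matrix of $X'$, and $e_u$ is then the standard basis vector of $u$ in $\mathbb{R}^{V(X')}$. *)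

From HB Require Import structures.
From mathcomp Require Import all_boot all_order all_algebra.
From mathcomp Require Import reals.
Set Implicit Arguments. Unset Strict Implicit. Unset Printing Implicit Defensive.
Import Order.TTheory GRing.Theory Num.Theory.
Local Open Scope ring_scope.

Definition simple_graph (n : nat) (e : rel 'I_n) : Prop :=
  irreflexive e /\ symmetric e.

Definition graph_connected (T : finType) (e : rel T) : Prop :=
  forall x y : T, connect e x y.

Definition walk_of_len (T : finType) (e : rel T) (k : nat) (u w : T) : bool :=
  [exists p : k.-tuple T, path e u p && (last u p == w)].

(* graph distance: least k with a walk of length k (a shortest walk is a
   path, of length < #|T|); #|T| if w is unreachable (irrelevant for
   connected graphs). *)
Definition dist (T : finType) (e : rel T) (u w : T) : nat :=
  find (fun k => walk_of_len e k u w) (iota 0 #|T|).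

Definition ecc (T : finType) (e : rel T) (u : T) : nat :=
  (\max_(w : T) dist e u w)%N.

Definition adjmx (R : nzRingType) (n : nat) (e : rel 'I_n) : 'M[R]_n :=
  \matrix_(i, j) (e i j)%:R.

Definition evec (R : nzRingType) (n : nat) (u : 'I_n) : 'cV[R]_n :=
  delta_mx u 0.

(* orthogonal projection onto the eigenspace of A for theta:
   with B a basis (rows) of the eigenspace, E = B^T (B B^T)^-1 B.
   It is 0 when theta is not an eigenvalue. *)
Definition eigproj (R : realFieldType) (n : nat) (A : 'M[R]_n) (theta : R)
  : 'M[R]_n :=
  let B := row_base (eigenspace A theta) in
  B^T *m invmx (B *m B^T) *m B.

Definition eig_support (R : realFieldType) (n : nat) (A : 'M[R]_n) (u : 'I_n)
  (theta : R) : Prop :=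
  eigproj A theta *m evec R u != 0.

(* dual degree d*(u) = |Phi_u| - 1; Phi_u is finite, represented by a
   duplicate-free list enumerating it *)
Definition dual_degree_is (R : realFieldType) (n : nat) (A : 'M[R]_n)
  (u : 'I_n) (d : nat) : Prop :=
  exists s : seq R, [/\ uniq s, (forall theta, theta \in s <-> eig_support A u theta)
                     & d = (size s).-1].

Definition spectrally_extremal (R : realFieldType) (n : nat) (e : rel 'I_n)
  (u : 'I_n) : Prop :=
  dual_degree_is (adjmx R e) u (ecc e u).

Definition strongly_cospectral (R : realFieldType) (n : nat) (A : 'M[R]_n)
  (u v : 'I_n) : Prop :=
  forall theta : R,
    eigproj A theta *m evec R v = eigproj A theta *m evec R u \/
    eigproj A theta *m evec R v = - (eigproj A theta *m evec R u).

Definition del_vertex (T : finType) (e : rel T) (v : T) : rel T :=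
  fun x y => [&& x != v, y != v & e x y].

Definition comp_del (T : finType) (e : rel T) (v u : T) : {set T} :=
  [set w | (w != v) && connect (del_vertex e v) u w].

Definition sub_adjmx (R : nzRingType) (T : finType) (e : rel T) (S : {set T})
  : 'M[R]_#|S| :=
  \matrix_(i, j) (e (enum_val i) (enum_val j))%:R.

Definition sub_evec (R : nzRingType) (T : finType) (S : {set T}) (u : T)
  : 'cV[R]_#|S| :=
  \col_(i < #|S|) (enum_val i == u)%:R.

Definition poly_mx_app (R : nzRingType) (m : nat) (q : {poly R}) (M : 'M[R]_m)
  (x : 'cV[R]_m) : 'cV[R]_m :=
  \sum_(i < size q) q`_i *: (M ^+ i *m x).

Definition is_minpoly_vec (R : nzRingType) (m : nat) (M : 'M[R]_m)
  (x : 'cV[R]_m) (q : {poly R}) : Prop :=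
  [/\ q \is monic, poly_mx_app q M x = 0 &
      forall r : {poly R}, r \is monic -> poly_mx_app r M x = 0 ->
        (size q <= size r)%N].

From HB Require Import structures.
From mathcomp Require Import all_boot all_order all_algebra.
From mathcomp Require Import reals.
From mathcomp.real_closed Require Import complex.
From mathcomp Require Import sesquilinear spectral zify.
Set Implicit Arguments. Unset Strict Implicit. Unset Printing Implicit Defensive.
Import Order.TTheory GRing.Theory Num.Theory.
Local Open Scope ring_scope.

(* Write [A] for the adjacency matrix of [X], [m = deg p] and [k = d(u,v)].
   Since [u] and [v] are strongly cospectral, [p(A) e_u = e_v]; as [p]
   interpolates on [Phi_u], [m <= |Phi_u| - 1 = ecc u], and no nonzero
   polynomial of degree at most [m] annihilates [e_u].  The entry [v] of
   [p(A) e_u] forces [k <= m]; conversely, for a vertex [w] at distance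
   [ecc u] from [u], only the leading term of [p] survives in the entry [w] of
   [A^(ecc u - m) e_v], so [w] is at distance at most [ecc u - m] from [v],
   whence [m <= k].  Thus [k = m].  Walks of length at most [k] from [u] stay
   in [X'] and reach [v] only at length [k], so [q(A(X')) e_u] is the
   restriction of [q(A) e_u] when [deg q <= k], and it determines it when
   [deg q < k].  Hence [p(A(X')) e_u] restricts [e_v], which vanishes on [X'],
   and a monic annihilator of [e_u] in [X'] of degree [< m] would annihilate
   [e_u] in [X]. *)

Section Walks.
Variables (T : finType) (e : rel T).

Lemma walk_of_len0 a b : walk_of_len e 0 a b = (a == b).
Proof.
apply/existsP/eqP => [[p /andP[_ /eqP]]|->]; first by rewrite tuple0.
by exists [tuple]; rewrite /= eqxx.
Qed.

Lemma walk_of_lenS j a b :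
  walk_of_len e j.+1 a b = [exists x, e a x && walk_of_len e j x b].
Proof.
apply/existsP/existsP => [[p]|[x /andP[ax /existsP[p /andP[pp lp]]]]].
  case/tupleP: p => x p /= /andP[/andP[ax pp] lp].
  by exists x; rewrite ax; apply/existsP; exists p; rewrite pp.
by exists [tuple of x :: p]; rewrite /= ax pp.
Qed.

Lemma walk_of_len_cat i j a b c :
  walk_of_len e i a b -> walk_of_len e j b c -> walk_of_len e (i + j) a c.
Proof.
elim: i a => [|i IH] a; first by rewrite walk_of_len0 => /eqP->.
rewrite walk_of_lenS => /existsP[x /andP[ax wx]] wj.
by rewrite addSn walk_of_lenS; apply/existsP; exists x; rewrite ax IH.
Qed.

Lemma dist_min j a b : walk_of_len e j a b -> (dist e a b <= j)%N.
Proof.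
move=> w; rewrite /dist; have [jT|Tj] := ltnP j #|T|; last first.
  by apply: leq_trans (find_size _ _) _; rewrite size_iota.
rewrite leqNgt; apply/negP => lt.
by have := before_find 0%N lt; rewrite nth_iota // add0n w.
Qed.

Lemma walk_of_len_dist a b : connect e a b -> walk_of_len e (dist e a b) a b.
Proof.
move=> /connectP[p pp ->]; case: (shortenP pp) => q qp uq _.
have hasW : has (fun k => walk_of_len e k a (last a q)) (iota 0 #|T|).
  apply/hasP; exists (size q); last first.
    by apply/existsP; exists (in_tuple q); rewrite /= qp eqxx.
  rewrite mem_iota add0n /=.
  by change (size (a :: q) <= #|T|)%N; rewrite -(card_uniqP uq) max_card.
have := nth_find 0%N hasW; rewrite nth_iota ?add0n //.
by move: hasW; rewrite has_find size_iota.
Qed.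

Lemma ecc_attained u : exists w, dist e u w = ecc e u.
Proof.
exists [arg max_(w > u) dist e u w].
by rewrite /ecc (bigop.bigmax_eq_arg u).
Qed.

Hypothesis esym : symmetric e.

Lemma walk_of_len_sym j a b : walk_of_len e j a b = walk_of_len e j b a.
Proof.
have walkC i c d : walk_of_len e i c d -> walk_of_len e i d c.
  elim: i c d => [|i IH] c d; first by rewrite !walk_of_len0 eq_sym.
  rewrite walk_of_lenS => /existsP[x /andP[cx wx]].
  rewrite -addn1; apply: walk_of_len_cat (IH _ _ wx) _.
  by rewrite walk_of_lenS; apply/existsP; exists c; rewrite esym cx walk_of_len0 eqxx.
by apply/idP/idP; apply: walkC.
Qed.

End Walks.

Lemma comp_del_closed (T : finType) (e : rel T) v u x y :
  x \in comp_del e v u -> e x y -> y != v -> y \in comp_del e v u.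
Proof.
rewrite !inE => /andP[xv ux] exy yv; rewrite yv.
by apply: connect_trans ux (connect1 _); rewrite /del_vertex xv yv exy.
Qed.

Lemma adjmx_tr (R : nzRingType) n (e : rel 'I_n) :
  symmetric e -> (adjmx R e)^T = adjmx R e.
Proof. by move=> esym; apply/matrixP => i j; rewrite !mxE esym. Qed.

Lemma mulmx_evecE (R : nzRingType) n (M : 'M[R]_n) w u :
  (M *m evec R u) w 0 = M w u.
Proof. by rewrite /evec -colE mxE. Qed.

Lemma poly_mx_appE (R : nzRingType) m (q : {poly R}) (M : 'M[R]_m) x i :
  (poly_mx_app q M x) i 0 = \sum_(j < size q) q`_j * (M ^+ j *m x) i 0.
Proof. by rewrite /poly_mx_app summxE; apply: eq_bigr => j _; rewrite mxE. Qed.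

Lemma poly_mx_appZ (R : idomainType) m (c : R) (q : {poly R}) (M : 'M[R]_m) x :
  c != 0 -> poly_mx_app (c *: q) M x = c *: poly_mx_app q M x.
Proof.
move=> c0; rewrite /poly_mx_app size_scale // scaler_sumr.
by apply: eq_bigr => j _; rewrite coefZ scalerA.
Qed.

Section AdjacencyPowers.
Variables (R : numDomainType) (n : nat) (e : rel 'I_n).
Local Notation A := (adjmx R e).

Lemma adjmx_exp0E a b : (A ^+ 0) a b = (a == b)%:R.
Proof. by rewrite expr0 mxE. Qed.

Lemma adjmx_expSE j a b : (A ^+ j.+1) a b = \sum_x (e a x)%:R * (A ^+ j) x b.
Proof. by rewrite exprS -mulmxE mxE; apply: eq_bigr => x _; rewrite mxE. Qed.

Lemma adjmx_exp_ge0 j a b : 0 <= (A ^+ j) a b.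
Proof.
elim: j a b => [|j IH] a b; first by rewrite adjmx_exp0E ler0n.
by rewrite adjmx_expSE sumr_ge0 // => x _; rewrite mulr_ge0 ?ler0n.
Qed.

Lemma adjmx_exp_neq0 j a b : ((A ^+ j) a b != 0) = walk_of_len e j a b.
Proof.
elim: j a b => [|j IH] a b.
  by rewrite adjmx_exp0E walk_of_len0 pnatr_eq0 eqb0 negbK.
rewrite adjmx_expSE walk_of_lenS; apply/idP/idP => [|/existsP[x /andP[ax w]]].
  apply: contraNT => /existsPn nowalk; apply/eqP/big1 => x _.
  have := nowalk x; rewrite -IH; case: (e a x) => /=; last by rewrite mul0r.
  by move/negPn/eqP->; rewrite mulr0.
rewrite (bigD1 x) //= ax mul1r; apply/lt0r_neq0/ltr_wpDr.
  by apply: sumr_ge0 => y _; rewrite mulr_ge0 ?ler0n ?adjmx_exp_ge0.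
by rewrite lt0r IH w adjmx_exp_ge0.
Qed.

Hypothesis esym : symmetric e.

Lemma adjmx_exp_lt_dist j u w : (j < dist e u w)%N -> (A ^+ j) w u = 0.
Proof.
move=> jd; apply/eqP; rewrite -[_ == 0]negbK adjmx_exp_neq0 walk_of_len_sym //.
by apply: contraTN jd => /dist_min; rewrite -leqNgt.
Qed.

Lemma adjmx_exp_dist_neq0 u w : connect e u w -> (A ^+ dist e u w) w u != 0.
Proof. by move=> uw; rewrite adjmx_exp_neq0 walk_of_len_sym ?walk_of_len_dist. Qed.

End AdjacencyPowers.

Section Eigenprojections.
Variables (R : realFieldType) (n : nat) (A : 'M[R]_n).
Local Notation E th := (eigproj A th).

Lemma eigproj_mulmx th : E th *m A = th *: E th.
Proof.
rewrite /eigproj /=; set B := row_base _.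
have BA : B *m A = th *: B by apply/eigenspaceP; rewrite eq_row_base.
by clearbody B; rewrite -!mulmxA BA !scalemxAr.
Qed.

Lemma eigproj_exp th i : E th *m A ^+ i = th ^+ i *: E th.
Proof.
elim: i => [|i IH]; first by rewrite !expr0 mulmx1 scale1r.
by rewrite exprSr -mulmxE mulmxA IH -scalemxAl eigproj_mulmx scalerA -exprSr.
Qed.

Lemma eigproj_poly_mx_app th (q : {poly R}) (x : 'cV_n) :
  E th *m poly_mx_app q A x = q.[th] *: (E th *m x).
Proof.
rewrite /poly_mx_app mulmx_sumr horner_coef scaler_suml; apply: eq_bigr => i _.
by rewrite -scalemxAr mulmxA eigproj_exp -scalemxAl scalerA.
Qed.

Lemma mulmx_tr_row_eq0 (z : 'rV[R]_n) : z *m z^T = 0 -> z = 0.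
Proof.
move/matrixP/(_ 0 0); rewrite !mxE => /eqP.
rewrite psumr_eq0 => [/allP zP|j _]; last by rewrite mxE -expr2 sqr_ge0.
apply/rowP => k; have := zP k (mem_index_enum _).
by rewrite /= !mxE mulf_eq0 orbb => /eqP.
Qed.

Lemma mulmx_tr_unitmx m (B : 'M[R]_(m, n)) : row_free B -> B *m B^T \in unitmx.
Proof.
move=> freeB; rewrite -row_free_unit -kermx_eq0; apply/eqP/row_matrixP => i.
set y := row i _; rewrite row0.
have y0 : y *m (B *m B^T) = 0 by rewrite /y -row_mul mulmx_ker row0.
apply/eqP; rewrite -(mulmx_free_eq0 _ freeB); apply/eqP/mulmx_tr_row_eq0.
by rewrite trmx_mul mulmxA -(mulmxA y) y0 mul0mx.
Qed.

(* For a basis [B] of the eigenspace, [B *m E = B], so [E x = 0] forces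
   [B x = 0]. *)
Lemma eigenvector_mulmx_eq0 th (w : 'rV_n) (x : 'cV_n) :
  w *m A = th *: w -> E th *m x = 0 -> w *m x = 0.
Proof.
move=> wA Ex; set B := row_base (eigenspace A th).
have /submxP[D ->] : (w <= B)%MS by rewrite eq_row_base; apply/eigenspaceP.
have U : B *m B^T \in unitmx by apply/mulmx_tr_unitmx/row_base_free.
have : B *m (E th *m x) = 0 by rewrite Ex mulmx0.
by rewrite /eigproj -/B !mulmxA mulmxV // mul1mx -!mulmxA => ->; rewrite mulmx0.
Qed.

Lemma poly_mx_app_neq0 (s : seq R) (q : {poly R}) (x : 'cV_n) :
  uniq s -> (forall th, th \in s -> E th *m x != 0) ->
  q != 0 -> (size q <= size s)%N -> poly_mx_app q A x != 0.
Proof.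
move=> us sx q0 qs; apply: contraTneq qs => qx; rewrite -ltnNge.
apply: max_poly_roots q0 _ us; apply/allP => th /sx Ex.
have /esym/eqP := eigproj_poly_mx_app th q x.
by rewrite qx mulmx0 scaler_eq0 (negbTE Ex) orbF.
Qed.

End Eigenprojections.

Lemma size_minimal_interpolant (F : fieldType) (P : F -> Prop) (f : F -> F)
    (s : seq F) (p : {poly F}) :
  (forall th, P th -> th \in s) -> (forall th, P th -> p.[th] = f th) ->
  (forall q, (forall th, P th -> q.[th] = f th) -> (size p <= size q)%N) ->
  (size p <= size s)%N.
Proof.
move=> Ps pf pmin; pose mu := \prod_(t <- s) ('X - t%:P).
have mu0 : mu != 0 by apply/monic_neq0/monic_prod_XsubC.
have : (size p <= size (p %% mu)%R)%N.
  by apply: pmin => th Pth; rewrite horner_mod ?pf // root_prod_XsubC Ps.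
by move/leq_ltn_trans/(_ (ltn_modpN0 p mu0)); rewrite size_prod_XsubC ltnS.
Qed.

Section SymmetricEigenvectors.
Variable R : rcfType.
Local Notation f := (real_complex R).
Local Notation Re := (@complex.Re R).
Local Notation Im := (@complex.Im R).

Lemma map_Re_mulmx m n l (P : 'M[R[i]]_(m, n)) (M : 'M[R]_(n, l)) :
  map_mx Re (P *m map_mx f M) = map_mx Re P *m M.
Proof.
apply/matrixP => i j; rewrite !mxE (raddf_sum (Re : Rcomplex R -> R)).
by apply: eq_bigr => k _; rewrite !mxE; case: (P i k) => a b /=; simpc.
Qed.

Lemma map_Im_mulmx m n l (P : 'M[R[i]]_(m, n)) (M : 'M[R]_(n, l)) :
  map_mx Im (P *m map_mx f M) = map_mx Im P *m M.
Proof.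
apply/matrixP => i j; rewrite !mxE (raddf_sum (Im : Rcomplex R -> R)).
by apply: eq_bigr => k _; rewrite !mxE; case: (P i k) => a b /=; simpc.
Qed.

Lemma map_ReIm_eq0 m n (P : 'M[R[i]]_(m, n)) :
  map_mx Re P = 0 -> map_mx Im P = 0 -> P = 0.
Proof.
move=> /matrixP Re0 /matrixP Im0; apply/matrixP => i j.
by move: (Re0 i j) (Im0 i j); rewrite !mxE; case: (P i j) => a b /= -> ->.
Qed.

(* Diagonalize [A] over [R[i]] by a unitary [P]; the real and imaginary parts
   of a row of [P] are real eigenvectors, and some row does not kill [x]. *)
Lemma symmx_eigenvector n (A : 'M[R]_n) (x : 'cV_n) : A^T = A -> x != 0 ->
  exists th (w : 'rV_n), w *m A = th *: w /\ w *m x != 0.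
Proof.
move=> sA x0; pose AC := map_mx f A; pose P := spectralmx AC.
pose D := spectral_diag AC; have PU : P \in unitmx := spectral_unit AC.
have hA : AC \is hermsymmx.
  apply/is_hermitianmxP; rewrite expr0 scale1r; apply/matrixP => i j.
  by rewrite !mxE -[in LHS]sA mxE conj_Creal // complex_real.
have PA : P *m AC = diag_mx D *m P.
  have /orthomx_spectralP -> := hermitian_normalmx hA.
  by rewrite -/P -/D !mulmxA mulmxV // mul1mx.
have /cV0Pn[i Pxi] : P *m map_mx f x != 0.
  apply: contraNneq x0 => Px0; rewrite -(map_mx_eq0 (real_complex R)).
  by rewrite -(mulKmx PU (map_mx f x)) Px0 mulmx0.
pose p := row i P.
have Dth : D 0 i = f (Re (D 0 i)).
  by rewrite RRe_real //; have /mxOverP := hermitian_spectral_diag_real hA; apply.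
have pA : p *m AC = p *m map_mx f (Re (D 0 i))%:M.
  rewrite /p -row_mul PA row_mul row_diag_mx -scalemxAl -rowE.
  by rewrite map_scalar_mx mul_mx_scalar {1}Dth.
exists (Re (D 0 i)).
have [ax|ax] := eqVneq (map_mx Re p *m x) 0; last first.
  by exists (map_mx Re p); rewrite -map_Re_mulmx pA map_Re_mulmx mul_mx_scalar.
exists (map_mx Im p); split.
  by rewrite -map_Im_mulmx pA map_Im_mulmx mul_mx_scalar.
apply: contra Pxi => /eqP bx.
have -> : (P *m map_mx f x) i 0 = (p *m map_mx f x) 0 0.
  by rewrite /p -row_mul [RHS]mxE.
by rewrite (map_ReIm_eq0 (P := p *m map_mx f x)) ?mxE ?map_Re_mulmx ?map_Im_mulmx.
Qed.

Lemma eigproj_complete n (A : 'M[R]_n) (x : 'cV_n) :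
  A^T = A -> (forall th, eigproj A th *m x = 0) -> x = 0.
Proof.
move=> sA Ex; apply/eqP; apply: contraT => x0.
have [th [w [wA wx]]] := symmx_eigenvector sA x0.
by rewrite (eigenvector_mulmx_eq0 wA (Ex th)) eqxx in wx.
Qed.

Lemma poly_mx_app_eigproj n (A : 'M[R]_n) (p : {poly R}) (x y : 'cV_n) :
  A^T = A ->
  (forall th, eigproj A th *m x != 0 ->
     eigproj A th *m y = p.[th] *: (eigproj A th *m x)) ->
  (forall th, eigproj A th *m x = 0 -> eigproj A th *m y = 0) ->
  poly_mx_app p A x = y.
Proof.
move=> sA xy x0y; apply/eqP; rewrite -subr_eq0; apply/eqP/(eigproj_complete sA) => th.
rewrite mulmxBr eigproj_poly_mx_app.
have [Ex|Ex] := eqVneq (eigproj A th *m x) 0; first by rewrite x0y // Ex scaler0 subr0.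
by rewrite xy // subrr.
Qed.

End SymmetricEigenvectors.

Section DistanceFromPolynomial.
Variables (R : realFieldType) (n : nat) (e : rel 'I_n) (u : 'I_n).
Hypothesis esym : symmetric e.
Local Notation A := (adjmx R e).
Local Notation eu := (evec R u).

Lemma poly_mx_app_evecE (q : {poly R}) w :
  (poly_mx_app q A eu) w 0 = \sum_(j < size q) q`_j * (A ^+ j) w u.
Proof. by rewrite poly_mx_appE; apply: eq_bigr => j _; rewrite mulmx_evecE. Qed.

Lemma dist_lt_size (q : {poly R}) w :
  (poly_mx_app q A eu) w 0 != 0 -> (dist e u w < size q)%N.
Proof.
rewrite poly_mx_app_evecE; apply: contraNT; rewrite -leqNgt => qd.
by apply/eqP/big1 => j _; rewrite adjmx_exp_lt_dist ?mulr0 //; apply: leq_trans qd.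
Qed.

(* The lower-order terms count walks from [u] to [w] shorter than
   [dist e u w]. *)
Lemma exp_poly_mx_app_far (q : {poly R}) w :
  ((size q).-1 <= dist e u w)%N ->
  (A ^+ (dist e u w - (size q).-1) *m poly_mx_app q A eu) w 0
    = lead_coef q * (A ^+ dist e u w) w u.
Proof.
set d := dist e u w; set m := (size q).-1 => md.
rewrite /poly_mx_app mulmx_sumr summxE.
have [->|q0] := eqVneq q 0; first by rewrite size_poly0 big_ord0 lead_coef0 mul0r.
have sq : size q = m.+1 by rewrite prednK // size_poly_gt0.
rewrite lead_coefE -/m sq big_ord_recr /= big1 ?add0r => [|j _].
  by rewrite -scalemxAr mulmxA mulmxE -exprD subnK // mxE mulmx_evecE.
have jm := ltn_ord j; rewrite -scalemxAr mulmxA mulmxE -exprD mxE mulmx_evecE.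
rewrite adjmx_exp_lt_dist ?mulr0 //.
by rewrite -/d; lia.
Qed.

Lemma dist_eq_deg (q : {poly R}) v :
  graph_connected e -> poly_mx_app q A eu = evec R v ->
  ((size q).-1 <= ecc e u)%N -> dist e u v = (size q).-1.
Proof.
move=> conn qv mecc.
have qv1 : (poly_mx_app q A eu) v 0 != 0 by rewrite qv mxE !eqxx oner_neq0.
have dq := dist_lt_size qv1.
have q_gt0 : (0 < size q)%N := leq_ltn_trans (leq0n _) dq.
apply/eqP; rewrite eqn_leq -ltnS prednK // dq /=.
have [w dw] := ecc_attained e u; rewrite -dw in mecc.
have : (A ^+ (dist e u w - (size q).-1)) w v != 0.
  rewrite -(mulmx_evecE _ w v) -qv exp_poly_mx_app_far //.
  by rewrite mulf_neq0 ?adjmx_exp_dist_neq0 // lead_coef_eq0 -size_poly_gt0.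
rewrite adjmx_exp_neq0 walk_of_len_sym //.
move/(walk_of_len_cat (walk_of_len_dist (conn u v)))/dist_min.
by set m := (size q).-1 in mecc *; lia.
Qed.

End DistanceFromPolynomial.

Section ComponentRestriction.
Variables (R : realFieldType) (n : nat) (e : rel 'I_n) (u v : 'I_n).
Hypotheses (esym : symmetric e) (uv : u != v).
Local Notation A := (adjmx R e).
Local Notation S := (comp_del e v u).
Local Notation A' := (sub_adjmx R e S).
Local Notation eu' := (sub_evec R S u).

Lemma adjmx_exp_notin_comp_del j w : (j <= dist e u v)%N ->
  w \notin S -> w != v -> (A ^+ j) w u = 0.
Proof.
elim: j w => [|j IH] w jk wS wv.
  by rewrite adjmx_exp0E; case: eqP wS => // ->; rewrite !inE uv connect0.
rewrite adjmx_expSE; apply: big1 => x _.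
have [xS|xS] := boolP (x \in S).
  have [ewx|_] := boolP (e w x); last by rewrite mul0r.
  by case/negP: wS; apply: comp_del_closed xS _ wv; rewrite esym.
have [->|xv] := eqVneq x v; first by rewrite adjmx_exp_lt_dist ?mulr0.
by rewrite IH ?mulr0 // ltnW.
Qed.

Lemma sub_adjmx_exp_comp_del j i : (j <= dist e u v)%N ->
  (A' ^+ j *m eu') i 0 = (A ^+ j) (enum_val i) u.
Proof.
elim: j i => [|j IH] i jk; first by rewrite expr0 mul1mx adjmx_exp0E !mxE.
rewrite exprS -mulmxE -mulmxA mxE adjmx_expSE (bigID (mem S)) /=.
rewrite [X in _ = _ + X]big1 ?addr0 => [|x xS]; last first.
  have [->|xv] := eqVneq x v; first by rewrite adjmx_exp_lt_dist ?mulr0.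
  by rewrite adjmx_exp_notin_comp_del ?mulr0 // ltnW.
rewrite (big_enum_val (fun x => (e (enum_val i) x)%:R * (A ^+ j) x u)).
by apply: eq_bigr => i' _; rewrite IH ?mxE // ltnW.
Qed.

Lemma poly_mx_app_comp_del (q : {poly R}) i : (size q <= (dist e u v).+1)%N ->
  (poly_mx_app q A' eu') i 0 = (poly_mx_app q A (evec R u)) (enum_val i) 0.
Proof.
move=> qk; rewrite poly_mx_appE poly_mx_app_evecE; apply: eq_bigr => j _.
by rewrite sub_adjmx_exp_comp_del // -ltnS (leq_trans _ qk).
Qed.

Lemma poly_mx_app_comp_del_eq0 (q : {poly R}) : (size q <= dist e u v)%N ->
  poly_mx_app q A' eu' = 0 -> poly_mx_app q A (evec R u) = 0.
Proof.
move=> qk /colP q0; apply/colP => w; rewrite mxE.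
have [wS|wS] := boolP (w \in S).
  by rewrite -(enum_rankK_in wS wS) -poly_mx_app_comp_del ?q0 ?mxE // ltnW.
rewrite poly_mx_app_evecE; apply: big1 => j _.
have jk : (j < dist e u v)%N by apply: leq_trans qk.
have [->|wv] := eqVneq w v; first by rewrite adjmx_exp_lt_dist ?mulr0.
by rewrite adjmx_exp_notin_comp_del ?mulr0 // ltnW.
Qed.

End ComponentRestriction.

Theorem lemma3p4 (R : realType) (n : nat) (e : rel 'I_n) (u v : 'I_n)
  (sigma : R -> R) (p : {poly R}) :
  simple_graph e ->
  graph_connected e ->
  u != v ->
  spectrally_extremal R e u ->
  strongly_cospectral (adjmx R e) u v ->
  (forall theta : R, eig_support (adjmx R e) u theta ->
     (sigma theta = 1 \/ sigma theta = -1) /\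
     eigproj (adjmx R e) theta *m evec R v
       = sigma theta *: (eigproj (adjmx R e) theta *m evec R u)) ->
  (forall theta : R, eig_support (adjmx R e) u theta -> p.[theta] = sigma theta) ->
  (forall q : {poly R},
     (forall theta : R, eig_support (adjmx R e) u theta -> q.[theta] = sigma theta) ->
     (size p <= size q)%N) ->
  exists c : R, c != 0 /\
    is_minpoly_vec (sub_adjmx R e (comp_del e v u))
                   (sub_evec R (comp_del e v u) u) (c *: p).
Proof.
move=> [_ esym] conn uv [s [us sP ecc_s]] scs sigma_uv p_sigma p_min.
have sA : (adjmx R e)^T = adjmx R e := adjmx_tr _ esym.
have pv : poly_mx_app p (adjmx R e) (evec R u) = evec R v.
  apply: poly_mx_app_eigproj sA _ _ => [th Eu|th Eu0].
    by have [_ ->] := sigma_uv th Eu; rewrite p_sigma.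
  by case: (scs th) => ->; rewrite Eu0 ?oppr0.
have p0 : p != 0.
  apply: contraPneq pv => ->; rewrite /poly_mx_app size_poly0 big_ord0.
  by move/matrixP/(_ v 0); rewrite !mxE !eqxx => /eqP; rewrite eq_sym oner_eq0.
have ps : (size p <= size s)%N.
  apply: (size_minimal_interpolant (P := eig_support (adjmx R e) u)) p_sigma p_min.
  by move=> th /sP.
have km : dist e u v = (size p).-1.
  by apply: dist_eq_deg; rewrite // ecc_s -!subn1 leq_sub2r.
have lp0 : lead_coef p != 0 by rewrite lead_coef_eq0.
exists (lead_coef p)^-1; split; first by rewrite invr_eq0.
split; first by rewrite monicE lead_coefZ mulVf.
- rewrite poly_mx_appZ ?invr_eq0 //; apply/colP => i.
  rewrite !mxE poly_mx_app_comp_del ?km ?prednK ?size_poly_gt0 // pv !mxE.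
  by have := enum_valP i; rewrite inE => /andP[/negbTE -> _]; rewrite mulr0.
- move=> r rm r0; rewrite size_scale ?invr_eq0 // leqNgt; apply/negP => rp.
  have rk : (size r <= dist e u v)%N by rewrite km -ltnS prednK ?size_poly_gt0.
  have := poly_mx_app_neq0 us (fun th => (sP th).1) (monic_neq0 rm).
  move/(_ (ltnW (leq_trans rp ps))).
  by rewrite (poly_mx_app_comp_del_eq0 esym uv rk r0) eqxx.
Qed.
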